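(* For every $n\ge0$, the number $e_n$ of Dyck paths with catastrophes of length $n$ equals the number $h_n$ of $1$-horizontal Dyck paths of length $n$.
   Context: A Dyck path with catastrophes of length $n$ is a sequence of $n$ steps starting and ending at altitude $0$ and never going below altitude $0$, where each step is either an up step $(1,1)$, a down step $(1,-1)$, or a catastrophe, i.e. a step from an altitude $h>1$ directly to altitude $0$. A $1$-horizontal Dyck path of length $n$ is a sequence of $n$ steps starting and ending at altitude $0$ and never going below altitude $0$, where each step is an up step $(1,1)$, a down step $(1,-1)$, or a horizontal step $(1,0)$, horizontal steps being allowed only at altitude $1$. *)

From HB Require Import structures.
From mathcomp Require Import all_boot.
Set Implicit Arguments. Unset Strict Implicit. Unset Printing Implicit Defensive.

Inductive cstep := CUp | CDown | CCat.
Definition cstep_code (s : cstep) : 'I_3 :=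
  match s with CUp => inord 0 | CDown => inord 1 | CCat => inord 2 end.
Definition cstep_decode (i : 'I_3) : cstep :=
  match val i with 0 => CUp | 1 => CDown | _ => CCat end.
Lemma cstep_codeK : cancel cstep_code cstep_decode.
Proof. by case; rewrite /cstep_decode /= inordK. Qed.
HB.instance Definition _ := Finite.copy cstep (can_type cstep_codeK).

Inductive hstep := HUp | HDown | HFlat.
Definition hstep_code (s : hstep) : 'I_3 :=
  match s with HUp => inord 0 | HDown => inord 1 | HFlat => inord 2 end.
Definition hstep_decode (i : 'I_3) : hstep :=
  match val i with 0 => HUp | 1 => HDown | _ => HFlat end.
Lemma hstep_codeK : cancel hstep_code hstep_decode.
Proof. by case; rewrite /hstep_decode /= inordK. Qed.
HB.instance Definition _ := Finite.copy hstep (can_type hstep_codeK).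

Fixpoint cvalid_from (h : nat) (s : seq cstep) : bool :=
  match s with
  | [::] => h == 0
  | CUp :: s' => cvalid_from h.+1 s'
  | CDown :: s' => (0 < h) && cvalid_from h.-1 s'
  | CCat :: s' => (1 < h) && cvalid_from 0 s'
  end.

Fixpoint hvalid_from (h : nat) (s : seq hstep) : bool :=
  match s with
  | [::] => h == 0
  | HUp :: s' => hvalid_from h.+1 s'
  | HDown :: s' => (0 < h) && hvalid_from h.-1 s'
  | HFlat :: s' => (h == 1) && hvalid_from h s'
  end.

Definition is_cat_dyck (s : seq cstep) := cvalid_from 0 s.
Definition is_1hor_dyck (s : seq hstep) := hvalid_from 0 s.

Definition e_count (n : nat) : nat := #|[set p : n.-tuple cstep | is_cat_dyck p]|.
Definition h_count (n : nat) : nat := #|[set p : n.-tuple hstep | is_1hor_dyck p]|.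

(* Cut both kinds of paths at their returns to altitude 0.  A piece of a
   catastrophe path is either U D_0 D or a meander U D_0 U D_1 ... U D_j C with
   j >= 1, the D_i being Dyck paths; a piece of a 1-horizontal path is
   U D_0 F D_1 ... F D_j D with j >= 0.  Replacing the j unmatched up steps after
   the first one by flat steps, and the catastrophe by a down step, is therefore
   a length-preserving bijection. *)

From mathcomp Require Import all_boot zify.

Section TupleBijection.
Variables (T U : finType) (P : pred (seq T)) (Q : pred (seq U)).
Variables (f : seq T -> seq U) (g : seq U -> seq T).
Hypothesis size_f : forall s, size (f s) = size s.
Hypothesis size_g : forall t, size (g t) = size t.
Hypothesis fK : forall s, P s -> Q (f s) /\ g (f s) = s.
Hypothesis gK : forall t, Q t -> P (g t) /\ f (g t) = t.

Lemma card_tuples_bij n :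
  #|[set p : n.-tuple T | P p]| = #|[set p : n.-tuple U | Q p]|.
Proof.
have f_tuple (p : n.-tuple T) : size (f p) == n by rewrite size_f size_tuple.
have g_tuple (p : n.-tuple U) : size (g p) == n by rewrite size_g size_tuple.
rewrite -(card_in_imset (f := fun p => Tuple (f_tuple p))); last first.
  move=> p q; rewrite !inE => /fK[_ gfp] /fK[_ gfq] /(congr1 val) /= fpq.
  by apply: val_inj; rewrite /= -gfp -gfq fpq.
congr #|pred_of_set _|; apply/setP => t; rewrite inE.
apply/imsetP/idP => [[p] | /gK[Pgt fgt]].
  by rewrite inE => /fK[Qfp _] ->.
by exists (Tuple (g_tuple t)); [rewrite inE | apply: val_inj].
Qed.

End TupleBijection.

(* For [d > 0]: walking along [s], the altitude [d] below the starting one is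
   reached before the first catastrophe. *)
Fixpoint drops (d : nat) (s : seq cstep) : bool :=
  match s with
  | [::] | CCat :: _ => false
  | CUp :: s' => drops d.+1 s'
  | CDown :: s' => (d == 1) || drops d.-1 s'
  end.

(* [h] is the altitude of the 1-horizontal path and [k] the number of its flat
   steps since the last visit to 0; the catastrophe path is at altitude [h + k]. *)
Fixpoint hor_to_cat (h k : nat) (t : seq hstep) : seq cstep :=
  match t with
  | [::] => [::]
  | HUp :: t' => CUp :: hor_to_cat h.+1 k t'
  | HFlat :: t' => CUp :: hor_to_cat h k.+1 t'
  | HDown :: t' =>
      if h == 1 then (if 0 < k then CCat else CDown) :: hor_to_cat 0 0 t'
      else CDown :: hor_to_cat h.-1 k t'
  end.

(* An up step from altitude 1 of the horizontal path that is not matched before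
   the next catastrophe becomes a flat step. *)
Fixpoint cat_to_hor (h : nat) (s : seq cstep) : seq hstep :=
  match s with
  | [::] => [::]
  | CUp :: s' => if (h == 1) && ~~ drops 1 s' then HFlat :: cat_to_hor 1 s'
                 else HUp :: cat_to_hor h.+1 s'
  | CDown :: s' => HDown :: cat_to_hor h.-1 s'
  | CCat :: s' => HDown :: cat_to_hor 0 s'
  end.

Lemma size_hor_to_cat h k t : size (hor_to_cat h k t) = size t.
Proof. by elim: t h k => [|[] t IH] h k //=; rewrite ?IH //; case: ifP; rewrite /= IH. Qed.

Lemma size_cat_to_hor h s : size (cat_to_hor h s) = size s.
Proof. by elim: s h => [|[] s IH] h //=; rewrite ?IH //; case: ifP; rewrite /= IH. Qed.

Lemma drops_hor_to_cat t h k d :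
  hvalid_from h t -> 0 < d < h -> drops d (hor_to_cat h k t).
Proof.
elim: t h k d => [|[] t IH] h k d /=.
- by move=> /eqP -> /andP[].
- by move=> ht dh; apply: IH => //; lia.
- move=> /andP[h_gt0 ht] dh; rewrite ifN_eq; last by lia.
  apply/orP; have [-> | d_neq1] := eqVneq d 1; first by left.
  by right; apply: IH => //; lia.
- by move=> /andP[/eqP -> _]; lia.
Qed.

Lemma drops_hor_to_catF t h k d :
  hvalid_from h t -> 0 < h -> 0 < k -> h <= d -> drops d (hor_to_cat h k t) = false.
Proof.
elim: t h k d => [|[] t IH] h k d //=.
- by move=> ht _ k_gt0 hd; apply: IH => //; lia.
- move=> /andP[_ ht] h_gt0 k_gt0 hd; case: eqP => [_|h_neq1] /=; first by rewrite k_gt0.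
  have d_neq1 : (d == 1) = false by lia.
  by rewrite d_neq1 /=; apply: IH => //; lia.
- by move=> /andP[/eqP -> ht] _ k_gt0 _; apply: IH.
Qed.

Lemma cvalid_hor_to_cat t h k :
  hvalid_from h t -> (h == 0 -> k == 0) -> cvalid_from (h + k) (hor_to_cat h k t).
Proof.
elim: t h k => [|[] t IH] h k /=.
- by move=> /eqP -> /(_ isT) /eqP ->.
- by move=> ht _; rewrite -addSn IH.
- move=> /andP[h_gt0 ht] hk; case: eqP => [h1 | /eqP h_neq1].
    subst h; case: posnP => [-> | k_gt0] /=; first exact: (IH 0 0).
    by rewrite (IH 0 0) // andbT; lia.
  rewrite /= (_ : (h + k).-1 = h.-1 + k) ?IH ?andbT //; lia.
- by move=> /andP[/eqP -> ht] _; rewrite -addnS IH.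
Qed.

Lemma hor_to_catK t h k :
  hvalid_from h t -> cat_to_hor h (hor_to_cat h k t) = t.
Proof.
elim: t h k => [|[] t IH] h k //=.
- move=> ht; rewrite IH //; have [h1 | //] := eqVneq h 1.
  by subst h; rewrite drops_hor_to_cat.
- move=> /andP[_ ht]; have [h1 | _] := eqVneq h 1; last by rewrite /= IH.
  by subst h; case: posnP => _; rewrite /= IH.
- move=> /andP[/eqP -> ht] /=.
  by rewrite (@drops_hor_to_catF t 1) ?IH.
Qed.

(* The states of [hor_to_cat] compatible with the catastrophe path [s] still to
   come: horizontal altitude 1 is reached again before the next catastrophe, and
   pending flat steps must end with that catastrophe rather than with a descent
   to horizontal altitude 0. *)
Definition hor_state (h k : nat) (s : seq cstep) : bool :=
  [&& (h == 0) ==> (k == 0), (1 < h) ==> drops h.-1 s & (k == 0) || ~~ drops h s].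

Lemma cat_to_hor_validK s h k : cvalid_from (h + k) s -> hor_state h k s ->
  hvalid_from h (cat_to_hor h s) /\ hor_to_cat h k (cat_to_hor h s) = s.
Proof.
elim: s h k => [|[] s IH] h k /=.
- by rewrite addn_eq0 => /andP[/eqP ->].
- case: h => [|[|h]] sv /and3P[/= k0 dr kd].
  + by rewrite (eqP k0) in sv *; have [hv ->] := IH 1 0 sv isT.
  + case dr1: (drops 1 s) => /=.
      have st : hor_state 2 k s by rewrite /hor_state /= dr1.
      by have [hv ->] := IH 2 k sv st.
    have st : hor_state 1 k.+1 s by rewrite /hor_state /= dr1.
    by have [hv ->] := IH 1 k.+1 sv st.
  + have st : hor_state h.+3 k s by rewrite /hor_state /= dr kd.
    by have [hv ->] := IH h.+3 k sv st.
- case: h => [|[|h]] /andP[h_gt0 sv] /and3P[/= k0 dr kd].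
  + by rewrite (eqP k0) in h_gt0.
  + move: kd; rewrite orbF => /eqP k0'; subst k.
    by have [hv ->] := IH 0 0 sv isT.
  + have st : hor_state h.+1 k s.
      rewrite /hor_state /= kd andbT; by case: h dr {sv h_gt0 kd} => [|h] /=.
    by rewrite addSn in sv; have [hv ->] := IH h.+1 k sv st.
- case: h => [|[|h]] /andP[k_gt sv] /and3P[/= k0 dr _] //.
  + by rewrite (eqP k0) in k_gt.
  + by rewrite ifT //; have [hv ->] := IH 0 0 sv isT.
Qed.

Theorem theorem3p1 : forall n : nat, e_count n = h_count n.
Proof.
move=> n; apply: (@card_tuples_bij _ _ _ _ (cat_to_hor 0) (hor_to_cat 0 0)).
- exact: size_cat_to_hor.
- exact: size_hor_to_cat.
- by move=> s cs; apply: (@cat_to_hor_validK s 0 0).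
- by move=> t ht; split; [apply: (@cvalid_hor_to_cat t 0 0) | apply: hor_to_catK].
Qed.
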